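(* For every $\epsilon>0$ there exists $n_0$ such that for all $n\ge n_0$, $d_n \ge (1-\epsilon)\, n\, 2^{2^{n-1}}$.
   Context: A delta-matroid $(E,\mathcal F)$ consists of a finite ground set $E$ and a non-empty collection $\mathcal F$ of subsets of $E$ (the feasible sets) satisfying the symmetric exchange axiom: for all $X,Y\in\mathcal F$ and every $e\in X\triangle Y$ there exists $f\in X\triangle Y$ (possibly $f=e$) with $X\triangle\{e,f\}\in\mathcal F$. Let $d_n$ denote the number of labelled delta-matroids with ground set $[n]=\{1,\dots,n\}$, i.e. the number of collections $\mathcal F$ of subsets of $[n]$ such that $([n],\mathcal F)$ is a delta-matroid. *)

From mathcomp Require Import all_boot.
Set Implicit Arguments.
Unset Strict Implicit.
Unset Printing Implicit Defensive.

Definition symdiff (T : finType) (A B : {set T}) : {set T} :=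
  (A :\: B) :|: (B :\: A).

Definition is_delta_matroid (T : finType) (F : {set {set T}}) : bool :=
  (F != set0) &&
  [forall X in F, forall Y in F, forall e in symdiff X Y,
     exists f in symdiff X Y, symdiff X [set e; f] \in F].

Definition num_delta_matroids (n : nat) : nat :=
  #|[set F : {set {set 'I_n}} | is_delta_matroid F]|.

(* Fix a point [i] of the ground set.  Any family of sets containing every set
   [X] whose part outside [i] has a prescribed parity is a delta-matroid: in the
   exchange axiom one either lands on [Y] itself (when [X] and [Y] differ only in
   [e] and [i]) or can choose the partner [f] of [e] so that [X] xor [{e, f}]
   has the prescribed parity outside [i].  The parity class fills half of the
   power set, so each pair (i, parity) already yields 2^(2^(n-1)) such families;
   forbidding a suitable set [excluded i b] in each keeps half of them and makes
   the 2(n-1) collections (i ranging over all points but the last) pairwise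
   disjoint, whence d_n >= (n-1) 2^(2^(n-1)) = (1 - o(1)) n 2^(2^(n-1)). *)

From Stdlib Require Import Reals Lra Lia.
From mathcomp Require all_boot.

Module DeltaMatroidLowerBound.
Import all_boot.
Set Implicit Arguments.
Unset Strict Implicit.
Unset Printing Implicit Defensive.

Section ParityClasses.
Variable T : finType.
Implicit Types (X Y D : {set T}) (F : {set {set T}}) (i j e f : T) (b c : bool).

Lemma in_symdiff X Y x : (x \in symdiff X Y) = (x \in X) (+) (x \in Y).
Proof. by rewrite !inE; case: (x \in X); case: (x \in Y). Qed.

Lemma symdiffKr X Y : symdiff X (symdiff X Y) = Y.
Proof. by apply/setP => x; rewrite !in_symdiff addKb. Qed.

Lemma odd_card_symdiff X Y : odd #|symdiff X Y| = odd #|X| (+) odd #|Y|.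
Proof.
rewrite cardsU.
have -> : (X :\: Y) :&: (Y :\: X) = set0.
  by apply/setP => x; rewrite !inE; case: (x \in X); case: (x \in Y).
rewrite cards0 subn0 -(cardsID Y X) -(cardsID X Y) setIC !oddD.
by case: (odd _); case: (odd _); case: (odd _).
Qed.

Definition parity_off i X := odd #|X :\ i|.

Lemma parity_offE i X : parity_off i X = odd #|X| (+) (i \in X).
Proof.
by rewrite /parity_off (cardsD1 i X) oddD; case: (i \in X); case: (odd _).
Qed.

Lemma parity_off_symdiff i X Y :
  parity_off i (symdiff X Y) = parity_off i X (+) parity_off i Y.
Proof.
rewrite !parity_offE odd_card_symdiff in_symdiff.
by case: (odd #|X|); case: (odd #|Y|); case: (i \in X); case: (i \in Y).
Qed.

Lemma parity_off_pair i e f :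
  parity_off i [set e; f] = if e == f then i != e else (i == e) || (i == f).
Proof.
rewrite parity_offE; case: (eqVneq e f) => [->|nef].
  by rewrite setUid cards1 !inE.
by rewrite cards2 nef !inE; case: (i == e); case: (i == f).
Qed.

Definition parity_class i b := [set X | parity_off i X == b].

Lemma parity_classC i b : ~: parity_class i b = parity_class i (~~ b).
Proof. by apply/setP => X; rewrite !inE; case: (parity_off i X); case: b. Qed.

(* If [g \in D] differs from [e] and [i], the pairs [{e, e}] and [{e, g}] have
   opposite parities outside [i]. *)
Lemma exchange_partner_parity i e D c :
  e \in D -> ~~ (D \subset [set e; i]) ->
  exists2 f, f \in D & parity_off i [set e; f] = c.
Proof.
move=> eD /subsetPn [g gD]; rewrite !inE negb_or => /andP [nge ngi].
have [pe pg] : parity_off i [set e; e] = (i != e) /\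
                parity_off i [set e; g] = (i == e).
  rewrite !parity_off_pair eqxx [e == g]eq_sym (negbTE nge).
  by rewrite [i == g]eq_sym (negbTE ngi) orbF.
exists (if c == (i != e) then e else g); first by case: ifP.
by case: ifP => [/eqP ->|/negbT]; rewrite ?pe ?pg //; case: c; case: (i == e).
Qed.

Lemma exchange_partner_spanning i e D :
  e \in D -> D \subset [set e; i] -> exists2 f, f \in D & [set e; f] = D.
Proof.
move=> eD sDei; have [iD|niD] := boolP (i \in D).
  exists i => //; apply/eqP; rewrite eqEsubset sDei andbT.
  by rewrite subUset !sub1set eD iD.
exists e => //; apply/eqP; rewrite eqEsubset setUid sub1set eD /=.
apply/subsetP => x xD; have := subsetP sDei x xD; rewrite !inE.
by case/orP => // /eqP xi; rewrite -xi xD in niD.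
Qed.

Lemma superset_parity_class_delta_matroid i j b F :
  j != i -> parity_class i b \subset F -> is_delta_matroid F.
Proof.
move=> nji sBF; apply/andP; split.
  apply/set0Pn; exists (if b then [set j] else set0); apply: (subsetP sBF).
  rewrite inE parity_offE; case: (b); rewrite ?cards1 ?cards0 !inE //=.
  by rewrite [i == j]eq_sym nji.
apply/forallP => X; apply/implyP => XF; apply/forallP => Y; apply/implyP => YF.
apply/forallP => e; apply/implyP => eD; apply/existsP.
have [sDei|nsDei] := boolP (symdiff X Y \subset [set e; i]).
  have [f fD efD] := exchange_partner_spanning eD sDei.
  by exists f; rewrite fD efD symdiffKr.
have [f fD pf] := exchange_partner_parity (parity_off i X (+) b) eD nsDei.
exists f; rewrite fD; apply: (subsetP sBF).
by rewrite inE parity_off_symdiff pf addKb.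
Qed.

Definition toggle j X := symdiff X [set j].

Lemma toggleK j : involutive (toggle j).
Proof. by move=> X; apply/setP => x; rewrite !in_symdiff addbK. Qed.

Lemma parity_off_toggle i j X :
  j != i -> parity_off i (toggle j X) = ~~ parity_off i X.
Proof.
move=> nji; rewrite parity_off_symdiff [parity_off i [set j]]parity_offE.
by rewrite cards1 in_set1 [i == j]eq_sym (negbTE nji) addbT.
Qed.

Lemma card_parity_class i j b :
  j != i -> #|parity_class i b| = 2 ^ #|T|.-1.
Proof.
move=> nji; have toggle_class : toggle j @: parity_class i b = ~: parity_class i b.
  rewrite (can2_imset_pre _ (toggleK j) (toggleK j)) parity_classC.
  apply/setP => X; rewrite !inE parity_off_toggle //.
  by case: (parity_off i X); case: b.
have := cardsC (parity_class i b).
rewrite -toggle_class card_imset; last exact: can_inj (toggleK j).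
rewrite -cardsT -powersetT card_powerset cardsT addnn.
have : 0 < #|T| by apply/card_gt0P; exists i.
by case: #|T| => // k _; rewrite expnS mul2n => /double_inj.
Qed.

End ParityClasses.

Lemma card_supersets_avoiding (U : finType) (B : {set U}) (z : U) :
  z \notin B ->
  2 ^ #|~: B|.-1 <= #|[set F : {set U} | (B \subset F) && (z \notin F)]|.
Proof.
move=> zB; set P := ~: B :\ z.
have cardP : #|P| = #|~: B|.-1 by rewrite [#|~: B|](cardsD1 z) inE zB.
have unionK : {in powerset P, cancel (fun A => B :|: A) (fun F => F :\: B)}.
  move=> A; rewrite inE => sAP; rewrite setDUl setDv set0U; apply/setDidPl.
  by rewrite disjoints_subset (subset_trans sAP) ?subsetDl.
rewrite -cardP -card_powerset -(card_in_imset (can_in_inj unionK)).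
apply/subset_leq_card/subsetP => F /imsetP [A /[!inE] sAP ->{F}].
rewrite !inE subsetUl negb_or zB /=.
by apply/negP => /(subsetP sAP); rewrite !inE eqxx.
Qed.

Section Construction.
Variable m : nat.
Implicit Types (i j : 'I_m) (b c : bool).

Let wid i : 'I_m.+1 := widen_ord (leqnSn m) i.

Lemma top_neq_wid i : ord_max != wid i.
Proof. by rewrite -val_eqE /= neq_ltn ltn_ord orbT. Qed.

Definition tail_block i := [set j : 'I_m.+1 | i <= j < m].

Definition excluded i b :=
  if odd #|tail_block i| == b then tail_block i else ord_max |: tail_block i.

Lemma odd_card_excluded i b : odd #|excluded i b| = b.
Proof.
rewrite /excluded; case: eqP => // /eqP.
by rewrite cardsU1 inE /= ltnn andbF add1n /=; case: (odd _); case: b.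
Qed.

Lemma wid_in_excluded i j b : (wid j \in excluded i b) = (i <= j).
Proof.
have in_tail : (wid j \in tail_block i) = (i <= j) by rewrite inE /= ltn_ord andbT.
rewrite /excluded; case: ifP => _; rewrite ?in_setU1 in_tail //.
by rewrite eq_sym (negbTE (top_neq_wid j)).
Qed.

Lemma parity_off_excluded i j b :
  parity_off (wid j) (excluded i b) = b (+) (i <= j).
Proof. by rewrite parity_offE odd_card_excluded wid_in_excluded. Qed.

Definition dm_family i b := [set F : {set {set 'I_m.+1}} |
  (parity_class (wid i) b \subset F) && (excluded i b \notin F)].

Lemma dm_family_delta_matroid i b F : F \in dm_family i b -> is_delta_matroid F.
Proof.
rewrite inE => /andP [sBF _].
exact: superset_parity_class_delta_matroid (top_neq_wid i) sBF.
Qed.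

(* Whichever of [i], [j] is smaller, one of the two excluded sets lies in the
   other parity class, so no family of supersets can avoid both. *)
Lemma excluded_separates i j b c : (i, b) != (j, c) ->
  (excluded i b \in parity_class (wid j) c) ||
  (excluded j c \in parity_class (wid i) b).
Proof.
rewrite !inE !parity_off_excluded.
case: (ltngtP i j) => [_|_|/val_inj ->]; try by case: b; case: c.
by rewrite xpair_eqE eqxx; case: b; case: c.
Qed.

Lemma disjoint_dm_family i j b c : (i, b) != (j, c) ->
  [disjoint dm_family i b & dm_family j c].
Proof.
move=> neq_ib_jc; apply/pred0P => F; rewrite /= !inE.
apply/negP => /andP [/andP [sBF nZF] /andP [sCF nZ'F]].
case/orP: (excluded_separates neq_ib_jc) => [/(subsetP sCF)|/(subsetP sBF)].
  by rewrite (negbTE nZF).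
by rewrite (negbTE nZ'F).
Qed.

Lemma card_dm_family i b : 2 ^ (2 ^ m).-1 <= #|dm_family i b|.
Proof.
have nZB : excluded i b \notin parity_class (wid i) b.
  by rewrite inE parity_off_excluded leqnn addbT; case: b.
have := card_supersets_avoiding nZB.
by rewrite parity_classC (card_parity_class _ (top_neq_wid i)) card_ord.
Qed.

Lemma num_delta_matroids_succ_ge : m * 2 ^ 2 ^ m <= num_delta_matroids m.+1.
Proof.
pose U := \bigcup_(t : 'I_m * bool) dm_family t.1 t.2.
have cardU : #|U| = \sum_(t : 'I_m * bool) #|dm_family t.1 t.2|.
  rewrite -sum1_card (partition_disjoint_bigcup addn (fun=> 1)).
    by apply: eq_bigr => t _; rewrite sum1_card.
  by move=> [i b] [j c]; apply: disjoint_dm_family.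
have -> : m * 2 ^ 2 ^ m = \sum_(t : 'I_m * bool) 2 ^ (2 ^ m).-1.
  rewrite sum_nat_const card_prod card_ord card_bool -mulnA -expnS prednK //.
  by rewrite expn_gt0.
apply: (@leq_trans #|U|).
  by rewrite cardU; apply: leq_sum => t _; apply: card_dm_family.
apply/subset_leq_card/subsetP => F /bigcupP [t _ Ft].
by rewrite inE (dm_family_delta_matroid Ft).
Qed.

End Construction.

Lemma pow_expn a k : Nat.pow a k = a ^ k.
Proof. by elim: k => //= k ->; rewrite expnS. Qed.

Lemma num_delta_matroids_ge n :
  ((n - 1) * Nat.pow 2 (Nat.pow 2 (n - 1)) <= num_delta_matroids n)%coq_nat.
Proof.
apply/leP; rewrite !pow_expn.
by case: n => [|m] //; rewrite subSS subn0 num_delta_matroids_succ_ge.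
Qed.

End DeltaMatroidLowerBound.

Open Scope R_scope.

Theorem theorem2 :
  forall eps : R, 0 < eps ->
  exists n0 : nat, forall n : nat, (n0 <= n)%nat ->
    (1 - eps) * INR n * 2 ^ (2 ^ (n - 1))%nat <= INR (num_delta_matroids n).
Proof.
intros eps heps.
destruct (INR_unbounded (/ eps)) as [N hN].
exists N; intros n hn.
assert (h_eps_n : 1 <= eps * INR n).
{ apply le_INR in hn.
  rewrite <- (Rinv_r eps) by lra.
  apply Rmult_le_compat_l; lra. }
assert (hn1 : (1 <= n)%nat).
{ destruct n; [simpl in h_eps_n; lra | lia]. }
apply Rle_trans with (INR (n - 1) * 2 ^ Nat.pow 2 (n - 1)).
- apply Rmult_le_compat_r; [apply pow_le; lra|].
  rewrite minus_INR by exact hn1; simpl INR; lra.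
- change 2 with (INR 2).
  rewrite <- pow_INR, <- mult_INR.
  apply le_INR, DeltaMatroidLowerBound.num_delta_matroids_ge.
Qed.
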